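(* Let $n,m$ be positive integers and $R_1,\dots,R_n:\{0,\dots,m\}\to\mathbb{R}$ arbitrary functions with $R_j(0)=0$. Let $0\le k<nm$ and let $\mathbf{x}$ be an optimal $k$-profile. Then there exists an optimal $(k+1)$-profile $\mathbf{y}$ such that $\mathrm{diff}(\mathbf{x},\mathbf{y})$ is irreducible.
   Context: A $k$-profile is a vector $\mathbf{x}=(x_1,\dots,x_n)$ with $x_j\in\{0,\dots,m\}$ and $\sum_j x_j=k$; it is optimal if its revenue $\sum_j R_j(x_j)$ is maximum among all $k$-profiles. For a $k$-profile $\mathbf{x}$ and a $(k+1)$-profile $\mathbf{y}$, $\mathrm{diff}(\mathbf{x},\mathbf{y})=(A,B)$ where $A$ is the multiset $\{y_i-x_i: i\in[n],\ y_i>x_i\}$ and $B$ is the multiset $\{x_i-y_i: i\in[n],\ x_i>y_i\}$ (both multisets of elements of $\{1,\dots,m\}$). A pair of multisets $(A,B)$ is reducible if the sum of some nonempty sub-multiset of $A$ equals the sum of some nonempty sub-multiset of $B$, and irreducible otherwise. *)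

From mathcomp Require Import all_boot all_order all_algebra.
From mathcomp Require Import reals.
Set Implicit Arguments. Unset Strict Implicit. Unset Printing Implicit Defensive.
Import Order.TTheory GRing.Theory Num.Theory.

Definition is_profile (n m k : nat) (x : 'I_n -> 'I_m.+1) : Prop :=
  (\sum_(j < n) (x j : nat))%N = k.

Definition revenue (R : realType) (n m : nat) (Rf : 'I_n -> 'I_m.+1 -> R)
  (x : 'I_n -> 'I_m.+1) : R := (\sum_(j < n) Rf j (x j))%R.

Definition optimal_profile (R : realType) (n m k : nat) (Rf : 'I_n -> 'I_m.+1 -> R)
  (x : 'I_n -> 'I_m.+1) : Prop :=
  is_profile k x /\
  forall x' : 'I_n -> 'I_m.+1, is_profile k x' -> (revenue Rf x' <= revenue Rf x)%R.

(* diff(x,y) = (A,B), multisets represented as sequences of naturals *)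
Definition diffA (n m : nat) (x y : 'I_n -> 'I_m.+1) : seq nat :=
  [seq (y i - x i)%N | i <- enum 'I_n & (x i < y i)%N].
Definition diffB (n m : nat) (x y : 'I_n -> 'I_m.+1) : seq nat :=
  [seq (x i - y i)%N | i <- enum 'I_n & (y i < x i)%N].

(* A sub-multiset of a multiset s is mask b s for some bitmask b. *)
Definition reducible (A B : seq nat) : Prop :=
  exists (a b : bitseq),
    mask a A != [::] /\ mask b B != [::] /\ sumn (mask a A) = sumn (mask b B).

Definition irreducible (A B : seq nat) : Prop := ~ reducible A B.

From mathcomp Require Import all_boot all_order all_algebra.
From mathcomp Require Import reals.
From mathcomp Require Import zify lra.
From Stdlib Require Import Classical.
Set Implicit Arguments. Unset Strict Implicit. Unset Printing Implicit Defensive.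
Import Order.TTheory GRing.Theory Num.Theory.

(* Among the optimal (k+1)-profiles take one, y, that disagrees with x in as
   few coordinates as possible.  If diff(x, y) were reducible, the two equal
   sub-sums single out a nonempty set C of disagreeing coordinates on which
   x and y have the same total.  Swapping x and y on C turns them into a
   k-profile w and a (k+1)-profile z with rev z + rev w = rev x + rev y; since
   rev w <= rev x, z is again optimal, yet z disagrees with x only outside C. *)

Section Profiles.

Variables n m : nat.
Implicit Types (x y u v : 'I_n -> 'I_m.+1) (C : {set 'I_n}).

Definition swap_on C u v (i : 'I_n) : 'I_m.+1 := if i \in C then u i else v i.

Definition disagreement x y : {set 'I_n} := [set i | x i != y i].

Lemma sum_swap_on C u v :
  (\sum_(i in C) (u i : nat) = \sum_(i in C) (v i : nat))%N ->
  (\sum_i (swap_on C v u i : nat) = \sum_i (u i : nat))%N.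
Proof.
move=> balanced.
rewrite [LHS](bigID (mem C)) [RHS](bigID (mem C)) /= balanced.
congr (_ + _)%N.
  by apply: eq_bigr => i; rewrite /swap_on => ->.
by apply: eq_bigr => i; rewrite /swap_on => /negbTE ->.
Qed.

Lemma revenue_swap_on (R : realType) (Rf : 'I_n -> 'I_m.+1 -> R) C u v :
  (revenue Rf (swap_on C u v) + revenue Rf (swap_on C v u)
   = revenue Rf u + revenue Rf v)%R.
Proof.
rewrite /revenue -!big_split; apply: eq_bigr => i _ /=.
by rewrite /swap_on; case: (i \in C); rewrite // addrC.
Qed.

Lemma disagreement_swap_on C x y :
  disagreement x (swap_on C x y) = disagreement x y :\: C.
Proof.
by apply/setP => i; rewrite !inE /swap_on; case: (i \in C); rewrite ?eqxx.
Qed.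

Lemma optimal_swap_on (R : realType) (Rf : 'I_n -> 'I_m.+1 -> R) k C x y :
  optimal_profile k Rf x -> optimal_profile k.+1 Rf y ->
  (\sum_(i in C) (x i : nat) = \sum_(i in C) (y i : nat))%N ->
  optimal_profile k.+1 Rf (swap_on C x y).
Proof.
move=> [px opt_x] [py opt_y] balanced.
have pw : is_profile k (swap_on C y x) by rewrite /is_profile sum_swap_on.
have le_w := opt_x _ pw.
have le_yz := revenue_swap_on Rf C x y.
split; first by rewrite /is_profile sum_swap_on.
by move=> y' py'; have := opt_y _ py'; lra.
Qed.

Lemma mask_diffA_set x y (a : bitseq) :
  exists I : {set 'I_n},
    [/\ I \subset [set i | x i < y i]%N,
        (mask a (diffA x y) == [::]) = (I == set0)
      & sumn (mask a (diffA x y)) = (\sum_(i in I) (y i - x i))%N].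
Proof.
set s := mask a [seq i <- enum 'I_n | x i < y i]%N.
have uniq_s : uniq s by apply/mask_uniq; rewrite filter_uniq ?enum_uniq.
have -> : mask a (diffA x y) = [seq (y i - x i)%N | i <- s] by rewrite map_mask.
exists [set i in s]; split.
- by apply/subsetP => i; rewrite !inE => /mem_mask; rewrite mem_filter => /andP[].
- by rewrite -!size_eq0 -cards_eq0 size_map cardsE (card_uniqP uniq_s).
- by rewrite sumnE big_map big_uniq //; apply: eq_bigl => i; rewrite inE.
Qed.

Lemma reducible_balanced_set x y :
  reducible (diffA x y) (diffB x y) ->
  exists2 C, C :&: disagreement x y != set0 &
    (\sum_(i in C) (x i : nat) = \sum_(i in C) (y i : nat))%N.
Proof.
move=> [a [b [nza [_ eq_sums]]]].
change (diffB x y) with (diffA y x) in eq_sums.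
have [I [sub_I nil_I sum_I]] := mask_diffA_set x y a.
have [J [sub_J _ sum_J]] := mask_diffA_set y x b.
have lt_I i : i \in I -> (x i < y i)%N by move/(subsetP sub_I); rewrite inE.
have lt_J i : i \in J -> (y i < x i)%N by move/(subsetP sub_J); rewrite inE.
have disj_IJ : [disjoint I & J].
  rewrite disjoint_subset; apply/subsetP => i /lt_I lt_xy; rewrite inE.
  by apply: contraTN lt_xy => /lt_J lt_yx; rewrite -leqNgt ltnW.
have [i0 Ii0] : exists i0, i0 \in I by apply/set0Pn; rewrite -nil_I.
exists (I :|: J).
  apply/set0Pn; exists i0; rewrite !inE Ii0 /=.
  by have := lt_I _ Ii0; rewrite neq_ltn => ->.
have split_sum (F : 'I_n -> nat) :
    (\sum_(i in I :|: J) F i = \sum_(i in I) F i + \sum_(i in J) F i)%N.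
  by rewrite (eq_bigl [predU I & J]) ?(bigU _ _ _ disj_IJ) // => i; rewrite !inE.
have sum_up (K : {set 'I_n}) (u v : 'I_n -> 'I_m.+1) :
    (forall i, i \in K -> u i < v i)%N ->
    (\sum_(i in K) (v i : nat) = \sum_(i in K) (u i : nat) + \sum_(i in K) (v i - u i))%N.
  move=> lt_uv; rewrite -big_split; apply: eq_bigr => i /lt_uv lt_i.
  by rewrite /= subnKC // ltnW.
rewrite !split_sum (sum_up I x y lt_I) (sum_up J y x lt_J) -sum_I -sum_J eq_sums.
lia.
Qed.

Lemma reducible_optimal_closer (R : realType) (Rf : 'I_n -> 'I_m.+1 -> R) k x y :
  optimal_profile k Rf x -> optimal_profile k.+1 Rf y ->
  reducible (diffA x y) (diffB x y) ->
  exists2 z, optimal_profile k.+1 Rf z &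
    (#|disagreement x z| < #|disagreement x y|)%N.
Proof.
move=> opt_x opt_y /reducible_balanced_set[C meet_C balanced].
exists (swap_on C x y); first exact: optimal_swap_on.
rewrite disagreement_swap_on; apply: proper_card; rewrite properE subsetDl /=.
have /set0Pn[i /setIP[Ci Di]] := meet_C.
by apply/subsetPn; exists i; rewrite // inE Ci.
Qed.

Lemma irreducible_optimal_exists (R : realType) (Rf : 'I_n -> 'I_m.+1 -> R) k x y :
  optimal_profile k Rf x -> optimal_profile k.+1 Rf y ->
  exists y', optimal_profile k.+1 Rf y' /\ irreducible (diffA x y') (diffB x y').
Proof.
move=> opt_x; have [d] := ubnP #|disagreement x y|.
elim: d y => // d IH y lt_d opt_y.
have [red|irr] := classic (reducible (diffA x y) (diffB x y)); last by exists y.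
have [z opt_z lt_z] := reducible_optimal_closer opt_x opt_y red.
rewrite ltnS in lt_d.
exact: (IH z (leq_trans lt_z lt_d) opt_z).
Qed.

Lemma profile_succ k x :
  is_profile k x -> (k < n * m)%N -> exists y, is_profile k.+1 y.
Proof.
move=> px lt_k.
have [i0 lt_i0] : exists i0, (x i0 < m)%N.
  apply/existsP; apply: contraTT lt_k; rewrite negb_exists => /forallP ge_m.
  rewrite -leqNgt -px -[n in (n * m)%N]card_ord -sum_nat_const.
  by apply: leq_sum => i _; rewrite leqNgt ge_m.
pose y i := if i == i0 then inord (x i0).+1 : 'I_m.+1 else x i.
exists y; rewrite /is_profile -px (bigD1 i0) // [in RHS](bigD1 i0) //=.
rewrite /y eqxx inordK // addSn; congr (_.+1 + _)%N.
by apply: eq_bigr => i /negbTE ->.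
Qed.

Lemma optimal_profile_exists (R : realType) (Rf : 'I_n -> 'I_m.+1 -> R) k x :
  is_profile k x -> exists y, optimal_profile k Rf y.
Proof.
move=> px.
have sum_ffun y : (\sum_i (finfun y i : nat) = \sum_i (y i : nat))%N.
  by apply: eq_bigr => i _; rewrite ffunE.
have revenue_ffun y : revenue Rf (finfun y) = revenue Rf y.
  by apply: eq_bigr => i _; rewrite ffunE.
pose P (f : {ffun 'I_n -> 'I_m.+1}) := (\sum_i (f i : nat) == k)%N.
have Px : P (finfun x) by rewrite /P sum_ffun px.
case: (arg_maxP (fun f : {ffun _ -> _} => revenue Rf f) Px) => f /eqP pf max_f.
exists f; split => // y py.
by rewrite -revenue_ffun; apply: max_f; rewrite /P sum_ffun py.
Qed.

End Profiles.

Theorem lemma3 (R : realType) (n m : nat) (Rf : 'I_n -> 'I_m.+1 -> R)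
  (hn : (0 < n)%N) (hm : (0 < m)%N)
  (hR0 : forall j : 'I_n, Rf j ord0 = 0%R)
  (k : nat) (hk : (k < n * m)%N)
  (x : 'I_n -> 'I_m.+1) (hx : optimal_profile k Rf x) :
  exists y : 'I_n -> 'I_m.+1,
    optimal_profile k.+1 Rf y /\ irreducible (diffA x y) (diffB x y).
Proof.
have [y1 py1] := profile_succ hx.1 hk.
have [y opt_y] := optimal_profile_exists Rf py1.
exact: irreducible_optimal_exists hx opt_y.
Qed.
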